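(* Let $B$ be a set of memory blocks and $G=(V,E)$ a finite directed multigraph whose edges are labeled with elements of $B$. For any nodes $v_1, v_2 \in V$ and any path $\pi$ in $G$ from $v_1$ to $v_2$, there is a path $\pi'$ from $v_1$ to $v_2$, obtained from $\pi$ by removing sub-paths, such that the set of labels of the edges of $\pi'$ equals the set of labels of the edges of $\pi$, and $\pi'$ has at most $|V|\cdot|B|$ edges (hence, taking $B$ to be the set of labels actually used, at most $|V|\cdot|E|$ edges). *)

From mathcomp Require Import all_boot.
Set Implicit Arguments. Unset Strict Implicit. Unset Printing Implicit Defensive.

Section Paths.
Variables (V E : finType) (src tgt : E -> V).

Fixpoint is_path (v1 v2 : V) (p : seq E) : bool :=
  match p with
  | [::] => v1 == v2
  | e :: p' => (src e == v1) && is_path (tgt e) v2 p'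
  end.
End Paths.

Definition labels (E : finType) (B : finType) (lab : E -> B) (p : seq E) : {set B} :=
  [set lab e | e in p].

From mathcomp Require Import all_boot.

(* Keep, for each label, the first edge of the path that carries it.  After
   each kept edge, the stretch up to the next kept edge (or to the end) brings
   no new label, so it can be shortcut to a simple path, which has fewer than
   |V| edges.  Each label therefore costs at most |V| edges. *)

Section LabelledPaths.
Local Set Implicit Arguments.
Local Unset Strict Implicit.

Variables (V E B : finType) (src tgt : E -> V) (lab : E -> B).

Lemma is_path_cat_cons v1 v2 s1 e s2 :
  is_path src tgt v1 v2 (s1 ++ e :: s2) =
  is_path src tgt v1 (src e) s1 && is_path src tgt (tgt e) v2 s2.
Proof.
elim: s1 v1 => [|x s1 IHs1] v1 /=; last by rewrite IHs1 andbA.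
by rewrite eq_sym.
Qed.

Lemma labelsE p : labels lab p = [set:: map lab p].
Proof. by apply/setP=> b; rewrite inE; apply/imsetP/mapP. Qed.

Lemma labels_cons e p : labels lab (e :: p) = lab e |: labels lab p.
Proof. by rewrite !labelsE set_cons. Qed.

Lemma labels_cat p q : labels lab (p ++ q) = labels lab p :|: labels lab q.
Proof. by apply/setP=> b; rewrite !labelsE !inE map_cat mem_cat. Qed.

Lemma labels_subseq p q : subseq p q -> labels lab p \subset labels lab q.
Proof.
move=> /(map_subseq lab)/mem_subseq sub.
by apply/subsetP=> b; rewrite !labelsE !inE => /sub.
Qed.

Lemma labels_subset (S : {set B}) p :
  (labels lab p \subset S) = all (fun e => lab e \in S) p.
Proof.
rewrite labelsE; apply/subsetP/allP => [Sp e ep | Sp b].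
  by apply: Sp; rewrite inE map_f.
by rewrite inE => /mapP[e ep ->]; apply: Sp.
Qed.

Lemma uniq_subpath v1 v2 p : is_path src tgt v1 v2 p ->
  exists p', [/\ is_path src tgt v1 v2 p', subseq p' p
               & uniq (v1 :: map tgt p')].
Proof.
elim: p v1 => [|e q IHq] v1; first by exists [::].
case/andP=> /eqP src_e /IHq[q' [pq' sq' ue]].
have pe : is_path src tgt v1 v2 (e :: q') by rewrite /= src_e eqxx.
have se : subseq (e :: q') (e :: q) by rewrite /= eqxx.
have [/mapP[e' e'q' v1_e'] | v1_fresh] := boolP (v1 \in map tgt (e :: q')).
  move: e'q' pe se ue; rewrite -map_cons; case/splitPr: _ / => s1 s2.
  rewrite is_path_cat_cons => /andP[_ ps2] se.
  rewrite map_cat cat_uniq => /and3P[_ _ us2].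
  exists s2; rewrite v1_e'; split=> //.
  by apply: subseq_trans se; rewrite -cat_rcons suffix_subseq.
by exists (e :: q'); split; rewrite //= v1_fresh.
Qed.

Lemma short_subpath v1 v2 p : is_path src tgt v1 v2 p ->
  exists p', [/\ is_path src tgt v1 v2 p', subseq p' p & size p' < #|V|].
Proof.
case/uniq_subpath=> p' [pp' sp' up']; exists p'; split=> //.
have := max_card (mem (v1 :: map tgt p')).
by rewrite (card_uniqP up') /= size_map.
Qed.

Lemma setU_labels_cat_cons (S : {set B}) s1 e s2 :
  labels lab s1 \subset S ->
  S :|: labels lab (s1 ++ e :: s2) = (lab e |: S) :|: labels lab s2.
Proof.
by move=> s1S; rewrite labels_cat labels_cons setUA (setUidPl s1S) setUCA setUA.
Qed.

(* [S] holds the labels already collected before the path [p] starts. *)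
Lemma subpath_cover_labels (S : {set B}) v1 v2 p : is_path src tgt v1 v2 p ->
  exists p', [/\ is_path src tgt v1 v2 p', subseq p' p,
                 S :|: labels lab p' = S :|: labels lab p
               & size p' < #|V| * #|labels lab p :\: S|.+1].
Proof.
have [n] := ubnP #|labels lab p :\: S|; elim: n => // n IHn in S v1 p *.
rewrite ltnS => card_lt_n pp.
have [pS | ] := boolP (labels lab p \subset S).
  have [p' [pp' sp' short]] := short_subpath pp.
  have p'S := subset_trans (labels_subseq sp') pS.
  exists p'; split=> //.
    by rewrite (setUidPl p'S) (setUidPl pS).
  by rewrite (leq_trans short) ?leq_pmulr.
rewrite labels_subset -has_predC => has_new; move: card_lt_n pp.
case/split_find: has_new => x s1 s2 /= xS {p}.
rewrite has_predC -labels_subset cat_rcons is_path_cat_cons.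
move=> /negbNE s1S card_lt_n /andP[ps1 ps2].
have [q' [pq' sq' short_q']] := short_subpath ps1.
have q'S := subset_trans (labels_subseq sq') s1S.
have fewer_new :
    labels lab s2 :\: (lab x |: S) \proper labels lab (s1 ++ x :: s2) :\: S.
  apply/properP; split.
    apply: subset_trans (setDS _ (subsetUr _ _)) (setSD _ _).
    by rewrite labels_subseq // -cat_rcons suffix_subseq.
  exists (lab x); last by rewrite !inE eqxx.
  by rewrite !inE xS imset_f // mem_cat mem_head orbT.
have := leq_trans (proper_card fewer_new) card_lt_n.
case/IHn/(_ ps2)=> r' [pr' sr' cover short_r'].
exists (q' ++ x :: r'); split.
- by rewrite is_path_cat_cons pq'.
- by rewrite cat_subseq //= eqxx.
- by rewrite !setU_labels_cat_cons.
rewrite size_cat -addSn (leq_trans (leq_add short_q' short_r')) //.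
by rewrite -mulnS leq_mul2l ltnS (proper_card fewer_new) orbT.
Qed.

End LabelledPaths.

Theorem mainTheorem7 (V E B : finType) (src tgt : E -> V) (lab : E -> B)
    (v1 v2 : V) (p : seq E) :
  is_path src tgt v1 v2 p ->
  exists p' : seq E,
    [/\ is_path src tgt v1 v2 p', subseq p' p,
        labels lab p' = labels lab p
      & size p' <= #|V| * #|B|].
Proof.
case: p => [|e q]; first by exists [::].
case/andP=> /eqP src_e pq.
have [q' [pq' sq' cover short]] := subpath_cover_labels lab [set lab e] pq.
have few_labels : #|labels lab q :\ lab e| < #|B|.
  rewrite -cardsT proper_card // properT.
  by apply: contraFneq (setD11 (lab e) (labels lab q)) => ->; rewrite inE.
exists (e :: q'); split.
- by rewrite /= src_e eqxx.
- by rewrite /= eqxx.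
- by rewrite !labels_cons.
- exact: leq_trans short (leq_mul (leqnn _) few_labels).
Qed.
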